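(* For any fixed integers $k\ge1$ and $d\ge2$, \[M_k(d,n)\ge T\big(n,N_k(d)\big)\ge\frac{n^2}{2}\Big(1-\frac1{N_k(d)}\Big)+O(1).\]
   Context: A set $P\subseteq\mathbb{R}^d$ is separated if $\|p_1-p_2\|\ge1$ for all distinct $p_1,p_2\in P$. $M_k(d,n)$ is the largest $M$ for which there exist a separated set $S\subseteq\mathbb{R}^d$ of $n$ points and reals $1\le t_1\le\dots\le t_k$ such that at least $M$ pairs $\{p_1,p_2\}\subseteq S$ satisfy $\|p_1-p_2\|\in\bigcup_{i=1}^k[t_i,t_i+1]$. $T(n,s)$ is the number of edges of the balanced complete $s$-partite graph on $n$ vertices. For $\varepsilon>0$, a separated set $P$ is an $\varepsilon$-nearly $k$-distance set (with distances $1\le t_1<\dots<t_k$) if $\|p_1-p_2\|\in\bigcup_{i=1}^k[t_i,t_i+\varepsilon]$ for all distinct $p_1,p_2\in P$. The angle between a vector $v$ and an affine subspace $\Lambda$ is the infimum of the angles between $v$ and vectors $w\in\Lambda-\Lambda$. A set $P\subseteq\mathbb{R}^d$ is $(d-1,\alpha)$-flat if for every $p\in P$ there is a hyperplane $\Lambda_p$ such that every vector $p-q$, $q\in P$, makes angle at most $\alpha$ with $\Lambda_p$. $N_k(d)$ is the largest $N$ such that for every $\varepsilon,\alpha>0$ there exists a $(d-1,\alpha)$-flat $\varepsilon$-nearly $k$-distance set in $\mathbb{R}^d$ of cardinality $N$. *)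

From HB Require Import structures.
From mathcomp Require Import all_boot all_order all_algebra.
From mathcomp Require Import all_classical all_reals.
From mathcomp Require Import trigo.
Set Implicit Arguments. Unset Strict Implicit. Unset Printing Implicit Defensive.
Import Order.TTheory GRing.Theory Num.Theory.
Local Open Scope ring_scope.
Local Open Scope classical_set_scope.

Section Defs.
Variable R : realType.

Definition dotv (d : nat) (u v : 'rV[R]_d) : R := \sum_(i < d) u ord0 i * v ord0 i.
Definition enorm (d : nat) (u : 'rV[R]_d) : R := Num.sqrt (dotv u u).
Definition edist (d : nat) (p q : 'rV[R]_d) : R := enorm (p - q).

Definition separated (d n : nat) (P : 'I_n -> 'rV[R]_d) : Prop :=
  forall i j : 'I_n, i != j -> 1 <= edist (P i) (P j).

Definition good_pairs (d n k : nat) (S : 'I_n -> 'rV[R]_d) (t : 'I_k -> R) : nat :=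
  #|[set p : 'I_n * 'I_n | (p.1 < p.2)%N &&
      `[< exists i : 'I_k, t i <= edist (S p.1) (S p.2) <= t i + 1 >] ]|.

Definition M_attainable (k d n M : nat) : Prop :=
  exists (S : 'I_n -> 'rV[R]_d) (t : 'I_k -> R),
    separated S /\ (forall i : 'I_k, 1 <= t i) /\
    (forall i j : 'I_k, (i <= j)%N -> t i <= t j) /\
    (M <= good_pairs S t)%N.

(* M_k(d,n): the largest such M (it is at most 'C(n,2)) *)
Definition Mk (k d n : nat) : nat :=
  \max_(M < 'C(n, 2).+1 | `[< M_attainable k d n M >]) M.

Definition vangle (d : nat) (v w : 'rV[R]_d) : R :=
  acos (dotv v w / (enorm v * enorm w)).

Definition hyperplane (d : nat) (u : 'rV[R]_d) (c : R) : set 'rV[R]_d :=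
  [set x | dotv u x = c].

Definition diffset (d : nat) (L : set 'rV[R]_d) : set 'rV[R]_d :=
  [set x - y | x in L & y in L].

Definition angle_sub (d : nat) (v : 'rV[R]_d) (L : set 'rV[R]_d) : R :=
  inf [set vangle v w | w in [set w | diffset L w /\ w != 0]].

Definition flat (d N : nat) (alpha : R) (P : 'I_N -> 'rV[R]_d) : Prop :=
  forall p : 'I_N, exists (u : 'rV[R]_d) (c : R), u != 0 /\
    forall q : 'I_N, q != p ->
      angle_sub (P p - P q) (hyperplane u c) <= alpha.

Definition nearly_k_distance (k d N : nat) (eps : R) (P : 'I_N -> 'rV[R]_d)
    (t : 'I_k -> R) : Prop :=
  separated P /\ (forall i : 'I_k, 1 <= t i) /\
  (forall i j : 'I_k, (i < j)%N -> t i < t j) /\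
  (forall p q : 'I_N, p != q ->
     exists i : 'I_k, t i <= edist (P p) (P q) <= t i + eps).

Definition Nk_admissible (k d N : nat) : Prop :=
  forall eps alpha : R, 0 < eps -> 0 < alpha ->
    exists (P : 'I_N -> 'rV[R]_d) (t : 'I_k -> R),
      flat alpha P /\ nearly_k_distance eps P t.

Definition is_Nk (k d N : nat) : Prop :=
  Nk_admissible k d N /\ forall N', Nk_admissible k d N' -> (N' <= N)%N.

End Defs.

(* T(n,s): edges of the balanced complete s-partite graph on vertex set 'I_n,
   parts = residue classes mod s (sizes differ by at most one) *)
Definition Turan (n s : nat) : nat :=
  #|[set p : 'I_n * 'I_n | (p.1 < p.2)%N && (p.1 %% s != p.2 %% s)%N]|.

(* Take a flat eps-nearly k-distance set P of N points, with distances
   t_1 < ... < t_k, and unit normals w_p almost orthogonal to every P_p - P_q.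
   Blow P up by a large factor L and replace each point L P_c by a column of
   points L P_c + j w_c, j = 0, 1, ..., at unit spacing along its normal, the
   n points being dealt to the N columns by residue mod N.  Flatness makes the
   offsets along the normals move the distance between two points of different
   columns by at most 1/4, so every such pair has its distance in some
   [L t_i - 1/2, L t_i + 1/2]: this gives a separated n-point set with at least
   T(n, N) good pairs.  The estimate of T(n, N) is the closed form
   2 N T(n, N) + r (N - r) = (N - 1) n^2, where r = n mod N. *)

From HB Require Import structures.
From mathcomp Require Import all_boot all_order all_algebra.
From mathcomp Require Import all_classical all_reals trigo.
From mathcomp Require Import ring lra zify.

Set Implicit Arguments.
Unset Strict Implicit.
Unset Printing Implicit Defensive.

Import Order.TTheory GRing.Theory Num.Theory.
Local Open Scope ring_scope.

Lemma in_mksetb (T : Type) (b : pred T) x : (x \in [set y | b y]%classic) = b x.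
Proof. by rewrite unfold_in /in_set asboolb. Qed.

Lemma count_mod_eq (N j : nat) :
  (\sum_(i < j) (i %% N == j %% N)%N)%N = (j %/ N)%N.
Proof.
rewrite divn_count_dvd -(big_mkord xpredT (fun i => (i %% N == j %% N)%N : nat)).
rewrite big_nat_rev /= [RHS]big_add1 /=.
apply: eq_big_nat => i /andP[_ hi]; congr (nat_of_bool _).
by rewrite eq_sym eqn_mod_dvd; [congr (_ %| _)%N; lia | lia].
Qed.

Lemma turan_sum (n N : nat) : Turan n N = (\sum_(j < n) (j - j %/ N))%N.
Proof.
rewrite /Turan -sum1_card (big_mkcond (fun p => p \in _)) /=.
under eq_bigr do rewrite in_mksetb.
rewrite -(pair_bigA _ (fun i j : 'I_n =>
  if (i < j)%N && (i %% N != j %% N)%N then 1%N else 0%N)) exchange_big /=.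
apply: eq_bigr => j _; rewrite -count_mod_eq.
have split_j :
    (\sum_(i < j) (i != j %[mod N]) + \sum_(i < j) (i == j %[mod N]))%N = j.
  rewrite -big_split -[RHS]card_ord -sum1_card.
  by apply: eq_big => // i; case: eqP.
rewrite -[X in (X - _)%N]split_j addnK.
rewrite (big_ord_widen n (fun i => (i != j %[mod N]) : nat)) ?(ltnW (ltn_ord j)) //.
by rewrite [RHS]big_mkcond; apply: eq_bigr => i _; case: (i < j)%N.
Qed.

Lemma turan_le_bin (n N : nat) : (Turan n N <= 'C(n, 2))%N.
Proof.
by rewrite turan_sum -bin2_sum big_mkord; apply: leq_sum => j _; apply: leq_subr.
Qed.

Lemma turan_closed_form (n N : nat) : (0 < N)%N ->
  (2 * N * Turan n N + n %% N * (N - n %% N) = (N - 1) * n ^ 2)%N.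
Proof.
move=> N_gt0; rewrite turan_sum.
elim: n => [|n IH]; first by rewrite big_ord0 mod0n; lia.
rewrite big_ord_recr /= modnS.
have n_eq := divn_eq n N; have r_lt := ltn_pmod n N_gt0.
set q := (n %/ N)%N in n_eq *; set r := (n %% N)%N in n_eq r_lt IH *.
set T := (\sum_(i < n) _)%N in IH *.
clearbody q r T; subst n.
(* With n = q N + r and N = r + 1 + s no truncated subtraction is left, and
   the identity is linear in its monomials. *)
have [s N_eq] : exists s, N = (r.+1 + s)%N by exists (N - r.+1)%N; rewrite subnKC.
subst N.
have -> : (q * (r.+1 + s) + r - q = q * (r + s) + r)%N by lia.
have N1_eq : (r.+1 + s - 1 = r + s)%N by lia.
have Nr_eq : (r.+1 + s - r = s.+1)%N by lia.
rewrite N1_eq Nr_eq in IH; rewrite N1_eq.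
case: ifP => [| _].
  rewrite -addnS dvdn_addr ?dvdn_mull // => /dvdn_leq N_le.
  have -> : s = 0%N by lia.
  by rewrite addn0 in IH *; lia.
have -> : (r.+1 + s - r.+1 = s)%N by lia.
lia.
Qed.

Lemma turan_ge (R : realType) (n N : nat) : (0 < N)%N ->
  (n%:R ^+ 2 / 2) * (1 - N%:R^-1) - N%:R / 2 <= (Turan n N)%:R :> R.
Proof.
move=> N_gt0; have closed := turan_closed_form n N_gt0.
have rem_le : (n %% N * (N - n %% N) <= N * N)%N.
  by rewrite leq_mul ?leq_subr // ltnW // ltn_pmod.
have : ((N - 1) * n ^ 2 <= N * N + 2 * N * Turan n N)%N by lia.
rewrite -(ler_nat R) !natrD !natrM natrB // => ineq.
have NR_gt0 : 0 < N%:R :> R by rewrite ltr0n.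
rewrite -(ler_pM2l (_ : 0 < 2 * N%:R)) ?mulr_gt0 //.
have -> : 2 * N%:R * (n%:R ^+ 2 / 2 * (1 - N%:R^-1) - N%:R / 2) =
  (N%:R - 1) * n%:R ^+ 2 - N%:R * N%:R :> R by field; rewrite gt_eqF.
lra.
Qed.

Section Euclidean.
Variables (R : realType) (d : nat).
Implicit Types (u v w : 'rV[R]_d) (a : R).

Lemma dotvC u v : dotv u v = dotv v u.
Proof. by apply: eq_bigr => i _; rewrite mulrC. Qed.

Lemma dotvDl u v w : dotv (u + v) w = dotv u w + dotv v w.
Proof. by rewrite /dotv -big_split; apply: eq_bigr => i _; rewrite mxE mulrDl. Qed.

Lemma dotvZl a u w : dotv (a *: u) w = a * dotv u w.
Proof. by rewrite /dotv mulr_sumr; apply: eq_bigr => i _; rewrite mxE mulrA. Qed.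

Lemma dotvNl u w : dotv (- u) w = - dotv u w.
Proof. by rewrite -scaleN1r dotvZl mulN1r. Qed.

Lemma dotvDr u v w : dotv w (u + v) = dotv w u + dotv w v.
Proof. by rewrite dotvC dotvDl !(dotvC w). Qed.

Lemma dotvZr a u w : dotv w (a *: u) = a * dotv w u.
Proof. by rewrite dotvC dotvZl dotvC. Qed.

Lemma dotvNr u w : dotv w (- u) = - dotv w u.
Proof. by rewrite dotvC dotvNl dotvC. Qed.

Lemma dotv0r u : dotv u 0 = 0.
Proof. by rewrite /dotv big1 // => i _; rewrite mxE mulr0. Qed.

Definition dotvE := (dotvDl, dotvDr, dotvNl, dotvNr, dotvZl, dotvZr).

Lemma dotv_ge0 u : 0 <= dotv u u.
Proof. by apply: sumr_ge0 => i _; rewrite -expr2 sqr_ge0. Qed.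

Lemma dotv_gt0 {u} : u != 0 -> 0 < dotv u u.
Proof.
move=> u0; rewrite lt_def dotv_ge0 andbT; apply: contra u0 => /eqP uu0.
apply/eqP/rowP => i; rewrite mxE.
have sq_ge0 (j : 'I_d) : true -> 0 <= u 0 j * u 0 j by rewrite -expr2 sqr_ge0.
by have /eqP := psumr_eq0P sq_ge0 uu0 (i := i) isT; rewrite mulf_eq0 orbb => /eqP.
Qed.

Lemma enorm_sqr u : enorm u ^+ 2 = dotv u u.
Proof. by rewrite sqr_sqrtr // dotv_ge0. Qed.

Lemma enorm_ge0 u : 0 <= enorm u.
Proof. exact: sqrtr_ge0. Qed.

Lemma enormZ a u : enorm (a *: u) = `|a| * enorm u.
Proof. by rewrite /enorm dotvZl dotvZr mulrA -expr2 sqrtrM ?sqr_ge0 // sqrtr_sqr. Qed.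

Lemma enormN u : enorm (- u) = enorm u.
Proof. by rewrite -scaleN1r enormZ normrN1 mul1r. Qed.

Lemma enorm_gt0 {u} : u != 0 -> 0 < enorm u.
Proof. by move=> u0; rewrite sqrtr_gt0 dotv_gt0. Qed.

Lemma dotv_cauchy_schwarz u v : dotv u v ^+ 2 <= dotv u u * dotv v v.
Proof.
have [->|v0] := eqVneq v 0; first by rewrite !dotv0r expr2 !mulr0.
have := dotv_ge0 (dotv v v *: u - dotv u v *: v).
rewrite !dotvE [dotv v u]dotvC; have := dotv_gt0 v0; nra.
Qed.

Lemma dotv_bessel {u w} v : u != 0 -> w != 0 -> dotv u w = 0 ->
  dotv v u ^+ 2 * dotv w w + dotv v w ^+ 2 * dotv u u
    <= dotv u u * dotv w w * dotv v v.
Proof.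
move=> u0 w0 uw0; have uu := dotv_gt0 u0; have ww := dotv_gt0 w0.
have := dotv_ge0 ((dotv u u * dotv w w) *: v - (dotv v u * dotv w w) *: u
                   - (dotv v w * dotv u u) *: w).
rewrite !dotvE [dotv u v]dotvC [dotv w v]dotvC [dotv w u]dotvC uw0.
set a := dotv v u; set b := dotv v w; set A := dotv u u; set B := dotv w w.
set V := dotv v v => h.
have AB_gt0 : 0 < A * B by exact: mulr_gt0.
rewrite -(ler_pM2l AB_gt0) -subr_ge0; nra.
Qed.

Lemma dotv_delta u i : dotv u (delta_mx 0 i) = u 0 i.
Proof.
rewrite /dotv (bigD1 i) //= big1 => [|j ji]; rewrite !mxE ?eqxx ?mulr1 ?addr0 //.
by rewrite (negbTE ji) mulr0.
Qed.

Lemma orthogonal_exists u : (2 <= d)%N -> exists2 w, w != 0 & dotv u w = 0.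
Proof.
move=> d2; have d0 : (0 < d)%N by lia.
pose i : 'I_d := Ordinal d0; pose j : 'I_d := Ordinal d2.
have delta_neq0 k : delta_mx 0 k != 0 :> 'rV[R]_d.
  by apply/eqP => /rowP /(_ k); rewrite !mxE !eqxx; apply/eqP; rewrite oner_eq0.
have [ui0 | ui_neq0] := eqVneq (u 0 i) 0.
  by exists (delta_mx 0 i); rewrite ?dotv_delta.
exists (u 0 j *: delta_mx 0 i - u 0 i *: delta_mx 0 j).
  apply: contra ui_neq0 => /eqP /rowP /(_ j).
  by rewrite !mxE eqxx /= mulr0 mulr1 sub0r => /eqP; rewrite oppr_eq0.
by rewrite dotvDr dotvNr !dotvZr !dotv_delta mulrC subrr.
Qed.

Lemma dotv_le_enorm u v : `|dotv u v| <= enorm u * enorm v.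
Proof.
rewrite -ler_sqr ?nnegrE ?mulr_ge0 ?enorm_ge0 // real_normK ?num_real //.
by rewrite exprMn !enorm_sqr dotv_cauchy_schwarz.
Qed.

Lemma dotv_unit_combination a b u v : dotv u u = 1 -> dotv v v = 1 ->
  dotv (a *: u - b *: v) (a *: u - b *: v) <= (`|a| + `|b|) ^+ 2.
Proof.
move=> uu vv; have uv_le := dotv_le_enorm u v.
rewrite /enorm uu vv sqrtr1 mulr1 in uv_le.
have cross_le : - (a * b * dotv u v) <= `|a| * `|b|.
  apply: le_trans (ler_norm _) _.
  by rewrite normrN !normrM ler_piMr ?mulr_ge0.
rewrite !dotvE uu vv [dotv v u]dotvC sqrrD !real_normK ?num_real //.
lra.
Qed.

Lemma enorm_addr_near u v : 1 / 4 <= enorm u ->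
  `|dotv u v| <= enorm u / 8 -> dotv v v <= enorm u / 4 ->
  enorm u - 1 / 4 <= enorm (u + v) <= enorm u + 1 / 4.
Proof.
move=> u_ge uv_le vv_le; have r2 := enorm_sqr u.
set r := enorm u in u_ge uv_le vv_le r2 *.
have uvuv : dotv (u + v) (u + v) = r ^+ 2 + 2 * dotv u v + dotv v v.
  by rewrite !dotvE r2 [dotv v u]dotvC; ring.
move: uv_le; rewrite ler_norml => /andP[uv_ge uv_le'].
apply/andP; split.
  rewrite -[_ - _]ger0_norm ?subr_ge0 // -sqrtr_sqr ler_wsqrtr // uvuv.
  have := dotv_ge0 v; nra.
have r_ge0 : 0 <= r + 1 / 4 by lra.
rewrite -[r + _]ger0_norm // -sqrtr_sqr ler_wsqrtr // uvuv.
nra.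
Qed.

Lemma vangle_lt_acos v w c : v != 0 -> w != 0 -> -1 <= c <= 1 ->
  vangle v w < acos c -> c * (enorm v * enorm w) < dotv v w.
Proof.
move=> v0 w0 c_itv.
have vw_gt0 : 0 < enorm v * enorm w by rewrite mulr_gt0 ?enorm_gt0.
have ratio_itv : -1 <= dotv v w / (enorm v * enorm w) <= 1.
  rewrite -ler_norml normrM normfV (gtr0_norm vw_gt0) ler_pdivrMr //.
  by rewrite mul1r dotv_le_enorm.
rewrite /vangle -ltr_cos ?in_itv /= ?acos_ge0 ?acos_lepi // !acosK ?in_itv //.
by rewrite ltr_pdivlMr.
Qed.

Lemma diffset_hyperplane {u c w} : diffset (hyperplane u c) w -> dotv u w = 0.
Proof. by move=> [x ux [y uy <-]]; rewrite dotvDr dotvNr ux uy subrr. Qed.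

Lemma diffset_hyperplane_neq0 u c : (2 <= d)%N -> u != 0 ->
  exists2 w, diffset (hyperplane u c) w & w != 0.
Proof.
move=> d2 u0; have [w w_neq0 uw0] := orthogonal_exists u d2.
pose y := (c / dotv u u) *: u.
have uy : dotv u y = c by rewrite dotvZr mulfVK // gt_eqF // dotv_gt0.
exists w => //; exists (y + w); first by rewrite /hyperplane /= dotvDr uy uw0 addr0.
by exists y => //; rewrite addrC addKr.
Qed.

Lemma angle_hyperplane_normal {v u c eta} : (2 <= d)%N -> 0 <= eta <= 1 ->
  v != 0 -> u != 0 -> angle_sub v (hyperplane u c) < acos (1 - eta) ->
  dotv v u ^+ 2 <= 2 * eta * dotv v v * dotv u u.
Proof.
move=> d2 /andP[eta_ge0 eta_le1] v0 u0 angle_lt.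
have [w0 w0_diff w0_neq0] := diffset_hyperplane_neq0 c d2 u0.
have angles_neq0 : ([set vangle v w | w in
    [set w | diffset (hyperplane u c) w /\ w != 0]] !=set0)%classic.
  by exists (vangle v w0), w0.
have [_ [w [w_diff w_neq0] <-]] := inf_lt angles_neq0 angle_lt.
move/vangle_lt_acos => /(_ v0 w_neq0) cos_lt.
have {cos_lt} vw_gt : (1 - eta) ^+ 2 * dotv v v * dotv w w < dotv v w ^+ 2.
  have /cos_lt lt_vw : -1 <= 1 - eta <= 1 by apply/andP; split; lra.
  have s_ge0 : 0 <= (1 - eta) * (enorm v * enorm w).
    by rewrite mulr_ge0 ?mulr_ge0 ?enorm_ge0 ?subr_ge0.
  rewrite -!enorm_sqr -mulrA -!exprMn ltr_pXn2r ?nnegrE //.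
  exact: le_trans (ltW lt_vw).
(* [w] is orthogonal to [u] and nearly parallel to [v], so Bessel's
   inequality leaves little room for the component of [v] along [u]. *)
have := dotv_bessel v u0 w_neq0 (diffset_hyperplane w_diff).
have uu := dotv_gt0 u0; have ww := dotv_gt0 w_neq0; have vv := dotv_gt0 v0.
have := ler_wpM2r (ltW uu) (ltW vw_gt).
have : 0 <= eta ^+ 2 * (dotv u u * dotv v v * dotv w w).
  by rewrite mulr_ge0 ?sqr_ge0 ?mulr_ge0 ?ltW.
rewrite -(ler_pM2r ww); nra.
Qed.

Lemma flat_unit_normals N (P : 'I_N -> 'rV[R]_d) sig : (2 <= d)%N ->
  0 < sig <= 1 -> separated P -> flat (acos (1 - sig ^+ 2 / 2) / 2) P ->
  exists w : 'I_N -> 'rV[R]_d, (forall p, dotv (w p) (w p) = 1) /\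
    forall p q, p != q ->
      dotv (P p - P q) (w p) ^+ 2 <= sig ^+ 2 * dotv (P p - P q) (P p - P q).
Proof.
move=> d2 /andP[sig_gt0 sig_le1] P_sep P_flat.
have /choice [uc uc_spec] : forall p, exists uc : 'rV[R]_d * R, uc.1 != 0 /\
    forall q, q != p ->
      angle_sub (P p - P q) (hyperplane uc.1 uc.2) <= acos (1 - sig ^+ 2 / 2) / 2.
  by move=> p; have [u [c spec]] := P_flat p; exists (u, c).
have acos_gt0 : 0 < acos (1 - sig ^+ 2 / 2).
  by rewrite acos_gt0 //; apply/andP; split; nra.
exists (fun p => (enorm (uc p).1)^-1 *: (uc p).1); split => [p | p q pq].
  have u_gt0 := enorm_gt0 (uc_spec p).1.
  by rewrite dotvZl dotvZr -enorm_sqr; field; rewrite gt_eqF.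
have [u_neq0 angle_le] := uc_spec p.
have Dpq_neq0 : P p - P q != 0.
  apply: contraTneq (P_sep p q pq); rewrite /edist => ->.
  by rewrite /enorm dotv0r sqrtr0 ler10.
have eta_itv : 0 <= sig ^+ 2 / 2 <= 1 by apply/andP; split; nra.
have angle_lt : angle_sub (P p - P q) (hyperplane (uc p).1 (uc p).2)
    < acos (1 - sig ^+ 2 / 2).
  by apply: le_lt_trans (angle_le q _) _; rewrite 1?eq_sym //; lra.
have := angle_hyperplane_normal d2 eta_itv Dpq_neq0 u_neq0 angle_lt.
rewrite dotvZr exprMn exprVn enorm_sqr [_^-1 * _]mulrC ler_pdivrMr ?dotv_gt0 //.
lra.
Qed.

End Euclidean.

Section BlowUp.
Variables (R : realType) (d N n : nat) (P w : 'I_N -> 'rV[R]_d) (sig : R).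
Hypothesis N_gt0 : (0 < N)%N.
Hypothesis P_sep : separated P.
Hypothesis w_unit : forall p, dotv (w p) (w p) = 1.
Hypothesis w_flat : forall p q, p != q ->
  dotv (P p - P q) (w p) ^+ 2 <= sig ^+ 2 * dotv (P p - P q) (P p - P q).
Hypothesis sig_ge0 : 0 <= sig.
Hypothesis sig_small : 16 * (n%:R + 1) * sig <= 1.

(* The offsets along the normals have length at most 2 n; this scale, with
   16 (n + 1) sig <= 1, keeps their effect on distances across columns
   below 1/4. *)
Definition blowup_scale : R := 16 * (n%:R + 1) ^+ 2.

Definition blowup_class (i : 'I_n) : 'I_N := Ordinal (ltn_pmod i N_gt0).

Definition blowup (i : 'I_n) : 'rV[R]_d :=
  blowup_scale *: P (blowup_class i) + (i %/ N)%:R *: w (blowup_class i).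

Lemma blowup_scale_ge16 : 16 <= blowup_scale.
Proof. by rewrite /blowup_scale; have := ler0n R n; nra. Qed.

Lemma flat_normal_abs p q : p != q ->
  `|dotv (P p - P q) (w p)| <= sig * enorm (P p - P q).
Proof.
move=> pq; rewrite -ler_sqr ?nnegrE ?mulr_ge0 ?enorm_ge0 //.
by rewrite real_normK ?num_real // exprMn enorm_sqr w_flat.
Qed.

Lemma flat_normal_abs_sym p q : p != q ->
  `|dotv (P p - P q) (w q)| <= sig * enorm (P p - P q).
Proof.
rewrite eq_sym => /flat_normal_abs.
by rewrite -opprB dotvNl normrN enormN.
Qed.

Lemma blowup_same_class i j : blowup_class i = blowup_class j -> i != j ->
  1 <= edist (blowup i) (blowup j).
Proof.
move=> cij ij; have mod_ij : (i %% N = j %% N)%N by move/(congr1 val): cij.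
have div_ij : (i %/ N)%N != (j %/ N)%N.
  apply: contra ij => /eqP div_eq; apply/eqP/val_inj.
  by rewrite /= (divn_eq i N) (divn_eq j N) div_eq mod_ij.
rewrite /edist.
have -> : blowup i - blowup j = ((i %/ N)%:R - (j %/ N)%:R) *: w (blowup_class i).
  by rewrite /blowup cij opprD addrACA subrr add0r scalerBl.
rewrite enormZ /enorm w_unit sqrtr1 mulr1 ler_normr.
have [lt_ij | lt_ji | eq_ij] := ltngtP (i %/ N) (j %/ N).
- by move: lt_ij; rewrite -(ler_nat R) -natr1 => ?; apply/orP; right; lra.
- by move: lt_ji; rewrite -(ler_nat R) -natr1 => ?; apply/orP; left; lra.
- by rewrite eq_ij eqxx in div_ij.
Qed.

Lemma offset_dotv_small p q a b : p != q ->
  0 <= a <= n%:R -> 0 <= b <= n%:R ->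
  `|dotv (P p - P q) (a *: w p - b *: w q)| <= enorm (P p - P q) / 8.
Proof.
move=> pq /andP[a_ge0 a_le] /andP[b_ge0 b_le].
set D := P p - P q; have D_ge0 := enorm_ge0 D.
rewrite dotvDr dotvNr !dotvZr; apply: le_trans (ler_normB _ _) _.
rewrite !normrM (ger0_norm a_ge0) (ger0_norm b_ge0).
have := ler_wpM2l a_ge0 (flat_normal_abs pq).
have := ler_wpM2l b_ge0 (flat_normal_abs_sym pq).
have s_ge0 := mulr_ge0 sig_ge0 D_ge0.
have := ler_wpM2r s_ge0 a_le; have := ler_wpM2r s_ge0 b_le.
have := ler_wpM2r D_ge0 sig_small; lra.
Qed.

Lemma offset_norm_small p q a b : 0 <= a <= n%:R -> 0 <= b <= n%:R ->
  dotv (a *: w p - b *: w q) (a *: w p - b *: w q) <= blowup_scale / 4.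
Proof.
move=> /andP[a_ge0 a_le] /andP[b_ge0 b_le].
apply: le_trans (dotv_unit_combination _ _ (w_unit p) (w_unit q)) _.
by rewrite !ger0_norm // /blowup_scale; nra.
Qed.

Lemma blowup_cross_class i j : blowup_class i != blowup_class j ->
  `|edist (blowup i) (blowup j)
    - blowup_scale * edist (P (blowup_class i)) (P (blowup_class j))| <= 1 / 4.
Proof.
set p := blowup_class i; set q := blowup_class j => pq.
set D := P p - P q; set a : R := (i %/ N)%:R; set b : R := (j %/ N)%:R.
have -> : edist (blowup i) (blowup j) =
    enorm (blowup_scale *: D + (a *: w p - b *: w q)).
  rewrite /edist /blowup /D scalerBr opprD !addrA.
  by congr (enorm (_ + _)); rewrite addrAC.
have quot_itv (k : 'I_n) : 0 <= ((k %/ N)%:R : R) <= n%:R.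
  by rewrite ler0n ler_nat (leq_trans (leq_div _ _)) // ltnW.
have D_ge1 : 1 <= enorm D := P_sep pq.
have L_gt0 : 0 < blowup_scale := lt_le_trans (ltr0n R 16) blowup_scale_ge16.
have := @enorm_addr_near _ _ (blowup_scale *: D) (a *: w p - b *: w q).
rewrite enormZ gtr0_norm // -ler_distl; apply.
- by have := blowup_scale_ge16; nra.
- rewrite dotvZl normrM gtr0_norm // -[blowup_scale * _ / 8]mulrA ler_pM2l //.
  exact: offset_dotv_small pq (quot_itv i) (quot_itv j).
- apply: le_trans (offset_norm_small _ _ (quot_itv i) (quot_itv j)) _.
  by have := ler_wpM2l (ltW L_gt0) D_ge1; lra.
Qed.

Lemma blowup_separated : separated blowup.
Proof.
move=> i j ij; have [cij | cij] := eqVneq (blowup_class i) (blowup_class j).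
  exact: blowup_same_class.
have := blowup_cross_class cij; rewrite ler_distl => /andP[+ _].
have := P_sep cij; have := blowup_scale_ge16; nra.
Qed.

Lemma blowup_good_pairs k (t : 'I_k -> R) eps : blowup_scale * eps <= 1 / 4 ->
  (forall p q, p != q -> exists l, t l <= edist (P p) (P q) <= t l + eps) ->
  (Turan n N <= good_pairs blowup (fun l => blowup_scale * t l - 1 / 2)%R)%N.
Proof.
move=> eps_small P_near; apply/subset_leq_card/fintype.subsetP => -[i j].
rewrite !in_mksetb /= => /andP[-> mod_ij]; apply/asboolP.
have cij : blowup_class i != blowup_class j.
  by apply: contra mod_ij => /eqP/(congr1 val) /= ->.
have [l /andP[t_le le_t]] := P_near _ _ cij; exists l.
have := blowup_cross_class cij; rewrite ler_distl => /andP[].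
have L_ge0 := le_trans (ler0n R 16) blowup_scale_ge16.
have := ler_wpM2l L_ge0 t_le; have := ler_wpM2l L_ge0 le_t.
move: (edist (blowup i) _) => x; rewrite mulrDr => ? ? ? ?.
by apply/andP; split; lra.
Qed.

End BlowUp.

Lemma Nk_admissible_attainable (R : realType) k d N n :
  (2 <= d)%N -> (0 < N)%N -> Nk_admissible R k d N -> M_attainable R k d n (Turan n N).
Proof.
move=> d2 N_gt0 adm.
pose sig : R := (16 * (n%:R + 1))^-1.
have m_gt0 : 0 < 16 * (n%:R + 1) :> R by rewrite mulr_gt0 ?ltr_wpDl.
have sig_gt0 : 0 < sig by rewrite invr_gt0.
have sig_small : 16 * (n%:R + 1) * sig <= 1 by rewrite mulfV ?gt_eqF.
have sig_le1 : sig <= 1 by rewrite invf_le1 //; have := ler0n R n; lra.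
have L_ge16 := blowup_scale_ge16 R n.
pose eps := (4 * blowup_scale R n)^-1.
have eps_gt0 : 0 < eps by rewrite invr_gt0; lra.
have eps_small : blowup_scale R n * eps <= 1 / 4.
  by rewrite /eps invfM mulrCA mulfV ?mulr1 ?gt_eqF //; lra.
have alpha_gt0 : 0 < acos (1 - sig ^+ 2 / 2) / 2.
  by rewrite divr_gt0 // acos_gt0 //; apply/andP; split; nra.
have [P [t [P_flat [P_sep [t_ge1 [t_lt P_near]]]]]] := adm _ _ eps_gt0 alpha_gt0.
have sig_itv : 0 < sig <= 1 by rewrite sig_gt0.
have [w [w_unit w_flat]] := flat_unit_normals d2 sig_itv P_sep P_flat.
have sep := blowup_separated N_gt0 P_sep w_unit w_flat (ltW sig_gt0) sig_small.
have good := blowup_good_pairs N_gt0 P_sep w_unit w_flat (ltW sig_gt0) sig_small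
  eps_small P_near.
exists (blowup P w N_gt0), (fun l => blowup_scale R n * t l - 1 / 2).
split; [exact: sep | split; [|split; [|exact: good]]].
  by move=> l; have := t_ge1 l; nra.
move=> l l'; rewrite leq_eqVlt => /predU1P [/val_inj -> // | /t_lt lt_ll'].
by rewrite lerD2r; apply: ler_wpM2l (ltW lt_ll'); lra.
Qed.

Lemma attainable_le_Mk (R : realType) k d n M : M_attainable R k d n M ->
  (M <= 'C(n, 2))%N -> (M <= Mk R k d n)%N.
Proof.
by rewrite -ltnS => att M_lt; apply: (leq_bigmax_cond (Ordinal M_lt) (asboolT att)).
Qed.

Lemma Nk_admissible1 (R : realType) k d : (0 < d)%N -> Nk_admissible R k d 1.
Proof.
move=> d_gt0 eps alpha _ _.
exists (fun=> 0), (fun l : 'I_k => l%:R + 1); split => [p|].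
  exists (delta_mx 0 (Ordinal d_gt0)), 0; split => [|q]; last by rewrite !ord1 eqxx.
  apply/eqP => /rowP /(_ (Ordinal d_gt0)).
  by rewrite !mxE !eqxx; apply/eqP; rewrite oner_eq0.
split; first by move=> i j; rewrite !ord1 eqxx.
split; first by move=> i; rewrite lerDr.
by split=> [i j ij | p q]; [rewrite ltrD2r ltr_nat | rewrite !ord1 eqxx].
Qed.

Theorem proposition2 (R : realType) (k d : nat) :
  (1 <= k)%N -> (2 <= d)%N ->
  forall N : nat, is_Nk R k d N ->
    (forall n : nat, (Turan n N <= Mk R k d n)%N) /\
    (exists C : R, forall n : nat,
       (n%:R ^+ 2 / 2) * (1 - N%:R^-1) - C <= (Turan n N)%:R).
Proof.
move=> _ d2 N [adm N_max].
have N_gt0 : (0 < N)%N := N_max 1%N (Nk_admissible1 k (ltnW d2)).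
split=> [n | ]; last by exists (N%:R / 2) => n; apply: turan_ge.
exact: attainable_le_Mk (Nk_admissible_attainable n d2 N_gt0 adm) (turan_le_bin n N).
Qed.
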